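(* Let $F$ be a unitary $N=(2,2)$ full vertex operator superalgebra and $d=G^+_{-1/2}+\bar G^+_{-1/2}$. Then the map $\bigoplus_{p,q\in\mathbb R}C^{(p,q)}(F)_{cc}\to H(F,d)=\ker d/\mathrm{Im}\,d$, sending a vector to its cohomology class, is a well-defined linear isomorphism.
   Context: A unitary $N=(2,2)$ full VOA is a full vertex operator superalgebra $F=\bigoplus_{(h,\bar h)\in\mathbb R^2}F_{h,\bar h}$ (Moriwaki's axioms: real-analytic locality/associativity of $Y(a,\underline z)=\sum_{r,s}a(r,s)z^{-r-1}\bar z^{-s-1}$, vacuum $\mathbf 1$, $F_{0,0}=\mathbb C\mathbf 1$, finite-dimensional bounded-below bigrading with $F_{h,\bar h}=0$ unless $h-\bar h\in\frac12\mathbb Z$, conformal vectors $\omega\in F_{2,0},\bar\omega\in F_{0,2}$ giving commuting Virasoro actions $L(n),\bar L(n)$ of central charges $c,\bar c>0$ with $L(0),\bar L(0)$ the bigrading) with holomorphic $\tau^\pm\in F_{3/2,0}$, $J\in F_{1,0}$ and antiholomorphic $\bar\tau^\pm\in F_{0,3/2}$, $\bar J\in F_{0,1}$ whose modes $G^\pm_r,J_n$ ($Y(\tau^\pm,\underline z)=\sum_{r\in\frac12+\mathbb Z}G^\pm_rz^{-r-3/2}$, $Y(J,\underline z)=\sum J_nz^{-n-1}$) and $\bar G^\pm_r,\bar J_n$ satisfy two supercommuting copies of the $N=2$ Neveu–Schwarz relations ($[J_m,J_n]=\frac c3m\delta_{m+n,0}$, $[J_m,G^\pm_r]=\pm G^\pm_{m+r}$,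 $[L_m,G^\pm_r]=(\frac m2-r)G^\pm_{m+r}$, $[L_m,J_n]=-nJ_{m+n}$, $[G^\pm_r,G^\pm_s]_+=0$, $[G^+_r,G^-_s]_+=L_{r+s}+\frac12(r-s)J_{r+s}+\frac c6(r^2-\frac14)\delta_{r+s,0}$; barred with $\bar c$), $J_0,\bar J_0$ semisimple with real eigenvalues, $J_0-\bar J_0$ integral with $\exp(\pi i(J_0-\bar J_0))$ the parity operator; plus an invariant symmetric bilinear form ($(\mathbf 1,\mathbf 1)=1$, $(u,Y(a,\underline z)v)=(Y(e^{L(1)z+\bar L(1)\bar z}(-1)^{(L(0)-\bar L(0))+2(L(0)-\bar L(0))^2}z^{-2L(0)}\bar z^{-2\bar L(0)}a,\underline z^{-1})u,v)$) and an anti-linear involutive automorphism $\phi$ with $\phi(J)=-J,\phi(\tau^\pm)=\tau^\mp,\phi(\bar J)=-\bar J,\phi(\bar\tau^\pm)=-\bar\tau^\mp$ and $(\phi(\cdot),\cdot)$ positive definite. $C^{(p,q)}(F)_{cc}$ is the space of vectors $v$ with $J_0v=pv$, $\bar J_0v=qv$, $L_nv=\bar L_nv=J_nv=\bar J_nv=0$ ($n\ge1$), $G^\pm_rv=\bar G^\pm_rv=0$ ($r\ge\frac12$), and $G^+_{-1/2}v=\bar G^+_{-1/2}v=0$ (chiral-chiral primary vectors of charge $(p,q)$). *)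

From mathcomp Require Import all_boot all_order all_algebra.
From mathcomp Require Import reals.
From mathcomp.real_closed Require Export complex.
Set Implicit Arguments. Unset Strict Implicit. Unset Printing Implicit Defensive.
Import Order.TTheory GRing.Theory Num.Theory.
Local Open Scope ring_scope.
Local Open Scope complex_scope.

Section FullVOA.
Variables (R : realType) (F : lmodType R[i]).
Local Notation C := R[i].

Definition isInt (x : R) : Prop := exists k : int, x = k%:~R.
Definition isHalfOdd (x : R) : Prop := exists k : int, x = k%:~R + 2^-1.
Definition isHalfInt (x : R) : Prop := exists k : int, x = k%:~R / 2.

(* Y a r s v = a(r,s) v, where Y(a,z) = sum_{r,s} a(r,s) z^{-r-1} zbar^{-s-1} *)
Variable Y : F -> R -> R -> F -> F.

Definition holo (a : F) : Prop := forall r s v, s <> -1 -> Y a r s v = 0.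
Definition antiholo (a : F) : Prop := forall r s v, r <> -1 -> Y a r s v = 0.

(* modes of a holomorphic field of weight 2, 1, 3/2 *)
Definition modeL (om : F) (n : R) : F -> F := Y om (n + 1) (-1).
Definition modeJ (j : F) (n : R) : F -> F := Y j n (-1).
Definition modeG (t : F) (r : R) : F -> F := Y t (r + 2^-1) (-1).
Definition modeLb (om : F) (n : R) : F -> F := Y om (-1) (n + 1).
Definition modeJb (j : F) (n : R) : F -> F := Y j (-1) n.
Definition modeGb (t : F) (r : R) : F -> F := Y t (-1) (r + 2^-1).

Definition comm (A B : F -> F) : F -> F := fun v => A (B v) - B (A v).
Definition acomm (A B : F -> F) : F -> F := fun v => A (B v) + B (A v).

Definition delta (x : R) : C := if x == 0 then 1 else 0.

Definition jeig (A B : F -> F) (p q : R) (v : F) : Prop :=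
  A v = p%:C *: v /\ B v = q%:C *: v.

(* F is spanned by joint eigenvectors of (A,B) with real eigenvalues
   (for linear A, B this is F = (+)_{p,q} of the joint eigenspaces) *)
Definition jeig_decomp (A B : F -> F) : Prop :=
  forall v, exists s : seq (R * R * F),
    v = \sum_(x <- s) x.2 /\ forall x, x \in s -> jeig A B x.1.1 x.1.2 x.2.

Definition fin_dim (P : F -> Prop) : Prop :=
  exists s : seq F, (forall x, x \in s -> P x) /\
    forall v, P v -> exists k : 'I_(size s) -> C, v = \sum_(i < size s) k i *: s`_i.

Definition lin1 (f : F -> F) : Prop := forall (k : C) a b, f (k *: a + b) = k *: f a + f b.

Definition sign_exp (k : int) : int := ((k * (k + 1)) %/ 2)%Z.

(* A unitary N=(2,2) full vertex operator superalgebra, axiomatized at the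
   level of modes. *)
Record unitaryN22 := {
  vac : F; om : F; omb : F; c : R; cb : R;
  tp : F; tm : F; J : F; tpb : F; tmb : F; Jb : F;
  bil : F -> F -> C; phi : F -> F;
  L := modeL om; Lb := modeLb omb;
  hom (h hb : R) (v : F) : Prop := L 0 v = h%:C *: v /\ Lb 0 v = hb%:C *: v;
  Y_linl : forall r s v (k : C) a b, Y (k *: a + b) r s v = k *: Y a r s v + Y b r s v;
  Y_linr : forall a r s, lin1 (Y a r s);
  grad_decomp : jeig_decomp (L 0) (Lb 0);
  grad_fin : forall h hb, fin_dim (hom h hb);
  grad_bdd : exists M : R, forall h hb v, hom h hb v -> v <> 0 -> M <= h /\ M <= hb;
  grad_half : forall h hb v, hom h hb v -> v <> 0 -> isHalfInt (h - hb);
  grad_00 : forall v, hom 0 0 v <-> exists k : C, v = k *: vac;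
  grad_mode : forall h hb h' hb' a v r s, hom h hb a -> hom h' hb' v ->
      hom (h + h' - r - 1) (hb + hb' - s - 1) (Y a r s v);
  vac_id : forall r s v, Y vac r s v = if (r == -1) && (s == -1) then v else 0;
  vac_create : forall a, Y a (-1) (-1) vac = a;
  vac_create0 : forall a r s, ~ (exists n m : nat, r = - n.+1%:R /\ s = - m.+1%:R) ->
      Y a r s vac = 0;
  transl : forall a r s v, Y (L (-1) a) r s v = - r%:C *: Y a (r - 1) s v;
  transl_b : forall a r s v, Y (Lb (-1) a) r s v = - s%:C *: Y a r (s - 1) v;
  om_hom : hom 2 0 om; om_holo : holo om;
  omb_hom : hom 0 2 omb; omb_antiholo : antiholo omb;
  c_pos : 0 < c; cb_pos : 0 < cb;
  vir : forall m n v, isInt m -> isInt n ->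
      comm (L m) (L n) v = (m - n)%:C *: L (m + n) v
                           + ((c / 12) * (m ^+ 3 - m))%:C * delta (m + n) *: v;
  vir_b : forall m n v, isInt m -> isInt n ->
      comm (Lb m) (Lb n) v = (m - n)%:C *: Lb (m + n) v
                           + ((cb / 12) * (m ^+ 3 - m))%:C * delta (m + n) *: v;
  tp_hom : hom (3 / 2) 0 tp; tm_hom : hom (3 / 2) 0 tm; J_hom : hom 1 0 J;
  tp_holo : holo tp; tm_holo : holo tm; J_holo : holo J;
  tpb_hom : hom 0 (3 / 2) tpb; tmb_hom : hom 0 (3 / 2) tmb; Jb_hom : hom 0 1 Jb;
  tpb_antiholo : antiholo tpb; tmb_antiholo : antiholo tmb; Jb_antiholo : antiholo Jb;
  nsJJ : forall m n v, isInt m -> isInt n ->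
      comm (modeJ J m) (modeJ J n) v = ((c / 3) * m)%:C * delta (m + n) *: v;
  nsJGp : forall m r v, isInt m -> isHalfOdd r ->
      comm (modeJ J m) (modeG tp r) v = modeG tp (m + r) v;
  nsJGm : forall m r v, isInt m -> isHalfOdd r ->
      comm (modeJ J m) (modeG tm r) v = - modeG tm (m + r) v;
  nsLGp : forall m r v, isInt m -> isHalfOdd r ->
      comm (L m) (modeG tp r) v = (m / 2 - r)%:C *: modeG tp (m + r) v;
  nsLGm : forall m r v, isInt m -> isHalfOdd r ->
      comm (L m) (modeG tm r) v = (m / 2 - r)%:C *: modeG tm (m + r) v;
  nsLJ : forall m n v, isInt m -> isInt n ->
      comm (L m) (modeJ J n) v = - n%:C *: modeJ J (m + n) v;
  nsGpGp : forall r s v, isHalfOdd r -> isHalfOdd s ->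
      acomm (modeG tp r) (modeG tp s) v = 0;
  nsGmGm : forall r s v, isHalfOdd r -> isHalfOdd s ->
      acomm (modeG tm r) (modeG tm s) v = 0;
  nsGpGm : forall r s v, isHalfOdd r -> isHalfOdd s ->
      acomm (modeG tp r) (modeG tm s) v =
        L (r + s) v + ((r - s) / 2)%:C *: modeJ J (r + s) v
        + ((c / 6) * (r ^+ 2 - 4^-1))%:C * delta (r + s) *: v;
  nsJJb : forall m n v, isInt m -> isInt n ->
      comm (modeJb Jb m) (modeJb Jb n) v = ((cb / 3) * m)%:C * delta (m + n) *: v;
  nsJGpb : forall m r v, isInt m -> isHalfOdd r ->
      comm (modeJb Jb m) (modeGb tpb r) v = modeGb tpb (m + r) v;
  nsJGmb : forall m r v, isInt m -> isHalfOdd r ->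
      comm (modeJb Jb m) (modeGb tmb r) v = - modeGb tmb (m + r) v;
  nsLGpb : forall m r v, isInt m -> isHalfOdd r ->
      comm (Lb m) (modeGb tpb r) v = (m / 2 - r)%:C *: modeGb tpb (m + r) v;
  nsLGmb : forall m r v, isInt m -> isHalfOdd r ->
      comm (Lb m) (modeGb tmb r) v = (m / 2 - r)%:C *: modeGb tmb (m + r) v;
  nsLJb : forall m n v, isInt m -> isInt n ->
      comm (Lb m) (modeJb Jb n) v = - n%:C *: modeJb Jb (m + n) v;
  nsGpGpb : forall r s v, isHalfOdd r -> isHalfOdd s ->
      acomm (modeGb tpb r) (modeGb tpb s) v = 0;
  nsGmGmb : forall r s v, isHalfOdd r -> isHalfOdd s ->
      acomm (modeGb tmb r) (modeGb tmb s) v = 0;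
  nsGpGmb : forall r s v, isHalfOdd r -> isHalfOdd s ->
      acomm (modeGb tpb r) (modeGb tmb s) v =
        Lb (r + s) v + ((r - s) / 2)%:C *: modeJb Jb (r + s) v
        + ((cb / 6) * (r ^+ 2 - 4^-1))%:C * delta (r + s) *: v;
  cross_even : forall m n v A B, isInt m -> isInt n ->
      (A = L m \/ A = modeJ J m) -> (B = Lb n \/ B = modeJb Jb n) ->
      comm A B v = 0;
  cross_mixed1 : forall m r v A B, isInt m -> isHalfOdd r ->
      (A = L m \/ A = modeJ J m) -> (B = modeGb tpb r \/ B = modeGb tmb r) ->
      comm A B v = 0;
  cross_mixed2 : forall r m v A B, isHalfOdd r -> isInt m ->
      (A = modeG tp r \/ A = modeG tm r) -> (B = Lb m \/ B = modeJb Jb m) ->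
      comm A B v = 0;
  cross_odd : forall r s v A B, isHalfOdd r -> isHalfOdd s ->
      (A = modeG tp r \/ A = modeG tm r) -> (B = modeGb tpb s \/ B = modeGb tmb s) ->
      acomm A B v = 0;
  J0_decomp : jeig_decomp (modeJ J 0) (modeJb Jb 0);
  J0_int : forall p q v, jeig (modeJ J 0) (modeJb Jb 0) p q v -> v <> 0 -> isInt (p - q);
  bil_linl : forall v (k : C) a b, bil (k *: a + b) v = k * bil a v + bil b v;
  bil_sym : forall u v, bil u v = bil v u;
  bil_vac : bil vac vac = 1;
  bil_inv : forall a h hb (k : int) (N : nat), hom h hb a ->
      2 * (h - hb) = k%:~R ->
      iter N (L 1) a = 0 -> iter N (Lb 1) a = 0 ->
      forall u v m n,
        bil u (Y a m n v) =
        \sum_(i < N) \sum_(j < N)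
          ((-1) ^ sign_exp k / (i`! * j`!)%:R) *
          bil (Y (iter i (L 1) (iter j (Lb 1) a))
                 (2 * h - m - 2 - i%:R) (2 * hb - n - 2 - j%:R) u) v;
  phi_antilin : forall (k : C) a b, phi (k *: a + b) = k^* *: phi a + phi b;
  phi_invol : forall a, phi (phi a) = a;
  phi_Y : forall a r s b, phi (Y a r s b) = Y (phi a) r s (phi b);
  phi_vac : phi vac = vac; phi_om : phi om = om; phi_omb : phi omb = omb;
  phi_J : phi J = - J; phi_tp : phi tp = tm; phi_tm : phi tm = tp;
  phi_Jb : phi Jb = - Jb; phi_tpb : phi tpb = - tmb; phi_tmb : phi tmb = - tpb;
  pos_def : forall u, u <> 0 -> 0 < bil (phi u) u
}.

Variable V : unitaryN22.

Definition dN22 (v : F) : F := modeG (tp V) (- 2^-1) v + modeGb (tpb V) (- 2^-1) v.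

Definition cc_primary (p q : R) (v : F) : Prop :=
  [/\ modeJ (J V) 0 v = p%:C *: v, modeJb (Jb V) 0 v = q%:C *: v,
      (forall n, isInt n -> 1 <= n ->
         [/\ L V n v = 0, Lb V n v = 0, modeJ (J V) n v = 0 & modeJb (Jb V) n v = 0]),
      (forall r, isHalfOdd r -> 0 < r ->
         [/\ modeG (tp V) r v = 0, modeG (tm V) r v = 0,
             modeGb (tpb V) r v = 0 & modeGb (tmb V) r v = 0])
    & modeG (tp V) (- 2^-1) v = 0 /\ modeGb (tpb V) (- 2^-1) v = 0].

(* an element of the direct sum (+)_{p,q} P(p,q): a finite family of vectors
   indexed by distinct pairs (p,q), the component at (p,q) lying in P(p,q) *)
Definition dsum_elem (P : R -> R -> F -> Prop) (s : seq (R * R * F)) : Prop :=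
  uniq (map fst s) /\ forall x, x \in s -> P x.1.1 x.1.2 x.2.

Definition dsum_val (s : seq (R * R * F)) : F := \sum_(x <- s) x.2.

Definition cohomologous (d : F -> F) (v w : F) : Prop := exists x, v - w = d x.

End FullVOA.

(** With [d* = G^-_{1/2} + Gbar^-_{1/2}] the N=2 relations give [d d* + d* d = Delta] with
    [Delta = (L_0 - J_0/2) + (Lbar_0 - Jbar_0/2)] commuting with [d], and unitarity makes [d*]
    the adjoint of [d] for the positive form [(phi _, _)].  Each chiral half
    [L_0 - J_0/2 = [G^+_{-1/2}, G^-_{1/2}]_+] is therefore nonnegative; a positive mode lowers
    its eigenvalue, so its kernel consists of vectors killed by all positive modes, and a
    harmonic vector ([Delta v = 0]) of definite charge is a chiral-chiral primary.  On a
    [Delta]-eigenspace with eigenvalue [lam <> 0], [d* / lam] is a contracting homotopy, so a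
    closed vector is cohomologous to its harmonic part; and a harmonic exact vector [S = d x]
    vanishes, since [(phi S, S) = (phi (d* S), x) = 0]. *)

From Pilot Require Import Defs.
From HB Require Import structures.
From mathcomp Require Import all_boot all_order all_algebra.
From mathcomp Require Import reals.
From mathcomp.real_closed Require Import complex.
From mathcomp Require Import lra.
Import Order.TTheory GRing.Theory Num.Theory.
Set Implicit Arguments. Unset Strict Implicit. Unset Printing Implicit Defensive.
Local Open Scope ring_scope.

(** * Simultaneous eigenvectors and abstract Hodge theory *)

Lemma big_undup_partition (V : nmodType) (X K : eqType) (s : seq X) (key : X -> K)
    (u : X -> V) :
  \sum_(k <- undup (map key s)) \sum_(x <- s | key x == k) u x = \sum_(x <- s) u x.
Proof.
under eq_bigr do rewrite big_mkcond.
rewrite exchange_big; apply: eq_big_seq => x xs /=.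
rewrite (bigD1_seq (key x)) ?undup_uniq ?mem_undup ?map_f //= eqxx big1 ?addr0 //.
by move=> k; rewrite eq_sym => /negPf ->.
Qed.

Lemma big_uniq_key (V : nmodType) (K : eqType) (s : seq (K * V)) x :
  uniq (map fst s) -> x \in s -> \sum_(y <- s | y.1 == x.1) y.2 = x.2.
Proof.
elim: s => [|y s IH] //= /andP[ys us]; rewrite inE big_cons => /orP[/eqP ->|xs].
  rewrite eqxx big1_seq ?addr0 // => z /andP[/eqP zy zs].
  by case/negP: ys; rewrite -zy map_f.
by rewrite ifN ?IH //; apply: contraNneq ys => ->; rewrite map_f.
Qed.

Lemma halfodd_pos_cases (R : realType) (r : R) :
  isHalfOdd r -> 0 < r -> r = 2^-1 \/ 3 / 2 <= r.
Proof.
case=> [[[|n]|n] ->] r_gt0; first by left; rewrite add0r.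
  right; have : (1 : R) <= n.+1%:R by rewrite ler1n.
  rewrite -pmulrn; lra.
move: r_gt0; rewrite NegzE mulrNz -pmulrn; have : (1 : R) <= n.+1%:R by rewrite ler1n.
lra.
Qed.

Section LinearAlgebra.
Variables (R : realType) (F : lmodType R[i]).
Local Open Scope complex_scope.
Local Notation C := R[i].
Implicit Types (f g A B M : F -> F) (u v w : F) (k : C).

Definition linfun f (hf : lin1 f) : {linear F -> F} :=
  HB.pack f (GRing.isLinear.Build _ _ _ _ f hf).

Section Lin1.
Variables (f : F -> F) (hf : lin1 f).
Lemma lin1_0 : f 0 = 0. Proof. exact: linear0 (linfun hf). Qed.
Lemma lin1D u v : f (u + v) = f u + f v. Proof. exact: (linearD (linfun hf) u v). Qed.
Lemma lin1B u v : f (u - v) = f u - f v. Proof. exact: (linearB (linfun hf) u v). Qed.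
Lemma lin1Z k u : f (k *: u) = k *: f u. Proof. exact: (linearZZ (linfun hf) k u). Qed.
Lemma lin1_sum (I : Type) (r : seq I) (P : pred I) (E : I -> F) :
  f (\sum_(i <- r | P i) E i) = \sum_(i <- r | P i) f (E i).
Proof. exact: (linear_sum (linfun hf) r P E). Qed.
Lemma lin1N u : f (- u) = - f u. Proof. exact: (linearN (linfun hf) u). Qed.
End Lin1.

Lemma lin1_add f g : lin1 f -> lin1 g -> lin1 (fun v => f v + g v).
Proof. by move=> hf hg k u v; rewrite hf hg scalerDr addrACA. Qed.

Lemma lin1_scale f k : lin1 f -> lin1 (fun v => k *: f v).
Proof. by move=> hf k' u v; rewrite hf scalerDr !scalerA mulrC. Qed.

Lemma lin1_sum_eig M (I : eqType) (r : seq I) (P : pred I) (E : I -> F) mu :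
  lin1 M -> (forall i, i \in r -> P i -> M (E i) = mu *: E i) ->
  M (\sum_(i <- r | P i) E i) = mu *: \sum_(i <- r | P i) E i.
Proof.
move=> hM eig; rewrite (lin1_sum hM) scaler_sumr big_seq_cond [RHS]big_seq_cond.
by apply: eq_bigr => i /andP[]; apply: eig.
Qed.

Definition shifts A B (a : R) := forall w, comm A B w = a%:C *: B w.

Lemma commN A B w : comm A B w = - comm B A w.
Proof. by rewrite /comm opprB. Qed.

Lemma shifts_eig A B a h w :
  lin1 B -> shifts A B a -> A w = h%:C *: w -> A (B w) = (h + a)%:C *: B w.
Proof.
move=> hB sAB Aw; apply/eqP; rewrite rmorphD scalerDl -subr_eq -sAB /comm Aw.
by rewrite (lin1Z hB) opprB addrCA subrr addr0.
Qed.

Lemma comm_eq0 A B w : comm A B w = 0 -> A (B w) = B (A w).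
Proof. by move/eqP; rewrite subr_eq0 => /eqP. Qed.

Lemma shifts0_commute A B w : shifts A B 0 -> A (B w) = B (A w).
Proof. by move=> sAB; apply: (@comm_eq0 A B w); rewrite sAB scale0r. Qed.

Lemma shifts_comb A A' B a a' (k : R) : lin1 B -> shifts A B a -> shifts A' B a' ->
  shifts (fun w => A w + k%:C *: A' w) B (a + k * a').
Proof.
move=> hB sA sA' w; have := sA w; have := sA' w.
rewrite /comm (lin1D hB) (lin1Z hB) => eA' eA.
by rewrite opprD addrACA -scalerBr eA eA' scalerA -scalerDl rmorphD rmorphM.
Qed.

Lemma eigensum0_weight A (X : eqType) (s : seq X) (lam : X -> C) (u : X -> F) :
  lin1 A -> (forall x, x \in s -> A (u x) = lam x *: u x) ->
  \sum_(x <- s) u x = 0 -> forall g : C -> C, \sum_(x <- s) g (lam x) *: u x = 0.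
Proof.
move=> hA; elim: s u => [|a s IH] u eig_u sum0 g; first by rewrite big_nil.
have eig_s x : x \in s -> A (u x) = lam x *: u x.
  by move=> xs; apply: eig_u; rewrite inE xs orbT.
rewrite big_cons in sum0.
have sum_s : \sum_(x <- s) u x = - u a by apply/eqP; rewrite -addr_eq0 addrC sum0.
(* applying [A - lam a] to the relation kills [u a] and leaves a relation on [s] *)
pose u' x := (lam x - lam a) *: u x.
have eig_u' x : x \in s -> A (u' x) = lam x *: u' x.
  by move=> xs; rewrite (lin1Z hA) eig_s // !scalerA mulrC.
have sum_u' : \sum_(x <- s) u' x = 0.
  rewrite /u'; under eq_bigr do rewrite scalerBl.
  rewrite sumrB -scaler_sumr.
  have -> : \sum_(x <- s) lam x *: u x = A (\sum_(x <- s) u x).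
    by rewrite (lin1_sum hA); apply: eq_big_seq => x xs; rewrite eig_s.
  by rewrite sum_s (lin1N hA) eig_u ?mem_head // scalerN subrr.
pose g' m := if m == lam a then 0 else (g m - g (lam a)) / (m - lam a).
have g'K x : g' (lam x) * (lam x - lam a) = g (lam x) - g (lam a).
  by rewrite /g'; case: eqP => [->|/eqP ne]; rewrite ?subrr ?mul0r // divfK // subr_eq0.
have := IH u' eig_u' sum_u' g'; rewrite /u'.
under eq_bigr do rewrite scalerA g'K scalerBl.
by rewrite sumrB -scaler_sumr sum_s scalerN opprK big_cons addrC => ->.
Qed.

Lemma jeig_sep A B (X : eqType) (s : seq X) (key : X -> R * R) (u : X -> F) :
  lin1 A -> lin1 B -> (forall x, x \in s -> jeig A B (key x).1 (key x).2 (u x)) ->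
  \sum_(x <- s) u x = 0 -> forall P, \sum_(x <- s | key x == P) u x = 0.
Proof.
move=> hA hB eig sum0 P.
pose ind (c : R) (m : C) : C := (m == c%:C)%:R.
have sumA := eigensum0_weight (lam := fun x => (key x).1%:C) hA
  (fun x xs => (eig x xs).1) sum0 (ind P.1).
have eigB x : x \in s -> B (ind P.1 (key x).1%:C *: u x) =
    (key x).2%:C *: (ind P.1 (key x).1%:C *: u x).
  by move=> xs; rewrite (lin1Z hB) (eig x xs).2 !scalerA mulrC.
have := eigensum0_weight (lam := fun x => (key x).2%:C) hB eigB sumA (ind P.2).
move=> sumB; rewrite big_mkcond -[RHS]sumB; apply: eq_bigr => x _.
rewrite scalerA /ind -natrM !(inj_eq (@complexI R)).
rewrite -[key x == P]/(((key x).1 == P.1) && ((key x).2 == P.2)).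
by case: ((key x).1 == P.1); case: ((key x).2 == P.2); rewrite ?scale1r ?scale0r.
Qed.

Lemma jeig_component A B M (t : seq (R * R * F)) (mu : R) :
  lin1 A -> lin1 B -> lin1 M ->
  (forall w, A (M w) = M (A w)) -> (forall w, B (M w) = M (B w)) ->
  (forall x, x \in t -> jeig A B x.1.1 x.1.2 x.2) ->
  M (\sum_(x <- t) x.2) = mu%:C *: \sum_(x <- t) x.2 ->
  forall P, M (\sum_(x <- t | x.1 == P) x.2) = mu%:C *: \sum_(x <- t | x.1 == P) x.2.
Proof.
move=> hA hB hM AM BM eig eigM P.
pose e (x : R * R * F) := M x.2 - mu%:C *: x.2.
have eig_e x : x \in t -> jeig A B x.1.1 x.1.2 (e x).
  move=> xt; have [Ax Bx] := eig x xt.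
  by split; rewrite /e ?(lin1B hA, lin1B hB) ?(lin1Z hA, lin1Z hB) ?(AM, BM) ?(Ax, Bx)
    (lin1Z hM) scalerBr !scalerA mulrC.
have sum_e : \sum_(x <- t) e x = 0 by rewrite sumrB -(lin1_sum hM) -scaler_sumr eigM subrr.
have := jeig_sep (key := fst) hA hB eig_e sum_e P.
by rewrite sumrB -(lin1_sum hM) -scaler_sumr => /subr0_eq.
Qed.

Lemma jeig_decomp_refine A B A' B' :
  lin1 A -> lin1 B -> lin1 A' -> lin1 B' ->
  (forall w, A' (A w) = A (A' w)) -> (forall w, B' (A w) = A (B' w)) ->
  (forall w, A' (B w) = B (A' w)) -> (forall w, B' (B w) = B (B' w)) ->
  jeig_decomp A B -> jeig_decomp A' B' ->
  forall v, exists s : seq (R * R * (R * R * F)), v = \sum_(x <- s) x.2.2 /\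
    forall x, x \in s -> jeig A B x.1.1 x.1.2 x.2.2 /\ jeig A' B' x.2.1.1 x.2.1.2 x.2.2.
Proof.
move=> hA hB hA' hB' cAA' cAB' cBA' cBB' decAB decA'B' v.
have refine h hb u : jeig A B h hb u -> exists s : seq (R * R * F), u = \sum_(y <- s) y.2 /\
    forall y, y \in s -> jeig A B h hb y.2 /\ jeig A' B' y.1.1 y.1.2 y.2.
  move=> [Au Bu]; have [t [ut eig_t]] := decA'B' u.
  exists [seq (P, \sum_(y <- t | y.1 == P) y.2) | P <- undup (map fst t)].
  split; first by rewrite big_map big_undup_partition.
  move=> _ /mapP[P _ ->] /=; split; split.
  - by apply: (jeig_component hA' hB' hA); rewrite // -ut.
  - by apply: (jeig_component hA' hB' hB); rewrite // -ut.
  - apply: (lin1_sum_eig hA') => y yt /eqP <-; exact: (eig_t y yt).1.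
  - apply: (lin1_sum_eig hB') => y yt /eqP <-; exact: (eig_t y yt).2.
have [t [-> eig_t]] := decAB v.
elim: t eig_t => [|y t IH] eig_t; first by exists [::]; rewrite !big_nil.
have [sy [ey eig_sy]] := refine _ _ _ (eig_t y (mem_head _ _)).
have /IH[s [es eig_s]] : forall z, z \in t -> jeig A B z.1.1 z.1.2 z.2.
  by move=> z zt; apply: eig_t; rewrite inE zt orbT.
exists ([seq (y.1, z) | z <- sy] ++ s); split.
  by rewrite big_cat big_map big_cons -ey -es.
by move=> x; rewrite mem_cat => /orP[/mapP[z /eig_sy ez ->]|/eig_s].
Qed.

Lemma closed_cohomologous_harmonic d ds Lap (X : eqType) (s : seq X) (lam : X -> C)
    (u : X -> F) v :
  lin1 d -> lin1 ds -> lin1 Lap ->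
  (forall w, d (ds w) + ds (d w) = Lap w) -> (forall w, Lap (d w) = d (Lap w)) ->
  (forall x, x \in s -> Lap (u x) = lam x *: u x) -> v = \sum_(x <- s) u x -> d v = 0 ->
  cohomologous d v (\sum_(x <- s | lam x == 0) u x).
Proof.
move=> hd hds hLap hodge cLap eig_u vE dv.
have eig_du x : x \in s -> Lap (d (u x)) = lam x *: d (u x).
  by move=> xs; rewrite cLap eig_u // (lin1Z hd).
have sum_du : \sum_(x <- s) d (u x) = 0 by rewrite -(lin1_sum hd) -vE.
have inv_du := eigensum0_weight hLap eig_du sum_du GRing.inv.
(* on the eigenvalue-[lam] part with [lam != 0], [ds / lam] is a contracting homotopy *)
exists (\sum_(x <- s) (lam x)^-1 *: ds (u x)).
transitivity (\sum_(x <- s) ((lam x)^-1 * lam x) *: u x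
              - ds (\sum_(x <- s) (lam x)^-1 *: d (u x))); last first.
  rewrite (lin1_sum hd) (lin1_sum hds) -sumrB; apply: eq_big_seq => x xs.
  have dds : d (ds (u x)) = Lap (u x) - ds (d (u x)) by rewrite -hodge addrK.
  by rewrite (lin1Z hd) (lin1Z hds) dds eig_u // scalerBr scalerA.
rewrite inv_du (lin1_0 hds) subr0 vE (bigID (fun x => lam x == 0)) /= addrAC subrr add0r.
rewrite big_mkcond; apply: eq_bigr => x _.
by case: eqP => [->|/eqP nz]; rewrite ?invr0 ?mul0r ?scale0r // mulVf // scale1r.
Qed.
End LinearAlgebra.

(** * Unitarity and the chiral Laplacians *)

Section FullVOA.
Variables (R : realType) (F : lmodType R[i]) (Y : F -> R -> R -> F -> F) (V : unitaryN22 Y).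
Local Open Scope complex_scope.
Local Notation C := R[i].
Implicit Types (u v w a b : F) (k : C).

Lemma Y_lin a r s : lin1 (Y a r s). Proof. exact: Y_linr. Qed.

Lemma YNl a r s v : Y (- a) r s v = - Y a r s v.
Proof. exact: (lin1N (Y_linl V r s v)). Qed.

Lemma Y_vac_eq0 a r s : 0 <= r \/ 0 <= s -> Y a r s (vac V) = 0.
Proof.
move=> rs; apply: vac_create0 => -[n [m [r_eq s_eq]]].
by have := ltr0Sn R n; have := ltr0Sn R m; lra.
Qed.

Lemma phi0 : phi V 0 = 0.
Proof.
have := phi_antilin V 1 0 0; rewrite scale1r addr0 conjC1 scale1r.
by move/(congr1 (fun x => x - phi V 0)); rewrite subrr addrK.
Qed.

Lemma phiD a b : phi V (a + b) = phi V a + phi V b.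
Proof. by have := phi_antilin V 1 a b; rewrite !scale1r conjC1 scale1r. Qed.

Definition bil_scalar v : {linear F -> C | *%R} :=
  HB.pack (fun a => bil V a v) (GRing.isLinear.Build _ _ _ _ _ (bil_linl V v)).

Lemma bil0l v : bil V 0 v = 0. Proof. exact: (linear0 (bil_scalar v)). Qed.
Lemma bilNl a v : bil V (- a) v = - bil V a v. Proof. exact: (linearN (bil_scalar v)). Qed.
Lemma bilDl a b v : bil V (a + b) v = bil V a v + bil V b v.
Proof. exact: (linearD (bil_scalar v)). Qed.
Lemma bilDr u a b : bil V u (a + b) = bil V u a + bil V u b.
Proof. by rewrite !(bil_sym _ u); exact: (linearD (bil_scalar u)). Qed.
Lemma bilZr u k a : bil V u (k *: a) = k * bil V u a.
Proof. by rewrite !(bil_sym _ u); exact: (linearZ_LR (bil_scalar u)). Qed.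

Definition hnorm u := bil V (phi V u) u.

Lemma hnorm_ge0 u : 0 <= hnorm u.
Proof.
have [->|/eqP u_nz] := eqVneq u 0; first by rewrite /hnorm phi0 bil0l.
exact/ltW/pos_def.
Qed.

Lemma hnorm_eq0 u : hnorm u = 0 -> u = 0.
Proof.
move=> n0; have [//|/eqP u_nz] := eqVneq u 0.
by have := pos_def V u_nz; rewrite -/(hnorm u) n0 ltxx.
Qed.

Lemma isInt0 : isInt (0 : R). Proof. by exists 0. Qed.
Lemma isInt1 : isInt (1 : R). Proof. by exists 1. Qed.
Lemma isHalfOdd_half : isHalfOdd (2^-1 : R). Proof. by exists 0; rewrite add0r. Qed.
Lemma isHalfOdd_Nhalf : isHalfOdd (- 2^-1 : R).
Proof. by exists (- 1); rewrite mulrNz; lra. Qed.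

(* One chiral N=2 Neveu-Schwarz algebra acting on [F], unitarily for [(phi _, _)]; only the
   relations used below are recorded. *)
Record unitaryN2 := {
  n2L : R -> F -> F; n2J : R -> F -> F; n2Gp : R -> F -> F; n2Gm : R -> F -> F; n2c : R;
  n2L_lin : forall n, lin1 (n2L n); n2J_lin : forall n, lin1 (n2J n);
  n2Gp_lin : forall r, lin1 (n2Gp r); n2Gm_lin : forall r, lin1 (n2Gm r);
  n2_vir : forall m n v, isInt m -> isInt n ->
      comm (n2L m) (n2L n) v = (m - n)%:C *: n2L (m + n) v
                               + ((n2c / 12) * (m ^+ 3 - m))%:C * delta (m + n) *: v;
  n2_JJ : forall m n v, isInt m -> isInt n ->
      comm (n2J m) (n2J n) v = ((n2c / 3) * m)%:C * delta (m + n) *: v;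
  n2_JGp : forall m r v, isInt m -> isHalfOdd r -> comm (n2J m) (n2Gp r) v = n2Gp (m + r) v;
  n2_JGm : forall m r v, isInt m -> isHalfOdd r -> comm (n2J m) (n2Gm r) v = - n2Gm (m + r) v;
  n2_LGp : forall m r v, isInt m -> isHalfOdd r ->
      comm (n2L m) (n2Gp r) v = (m / 2 - r)%:C *: n2Gp (m + r) v;
  n2_LGm : forall m r v, isInt m -> isHalfOdd r ->
      comm (n2L m) (n2Gm r) v = (m / 2 - r)%:C *: n2Gm (m + r) v;
  n2_LJ : forall m n v, isInt m -> isInt n -> comm (n2L m) (n2J n) v = - n%:C *: n2J (m + n) v;
  n2_GpGm : forall r s v, isHalfOdd r -> isHalfOdd s ->
      acomm (n2Gp r) (n2Gm s) v =
        n2L (r + s) v + ((r - s) / 2)%:C *: n2J (r + s) v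
        + ((n2c / 6) * (r ^+ 2 - 4^-1))%:C * delta (r + s) *: v;
  n2_adjGp : forall w v, bil V (phi V w) (n2Gp (- 2^-1) v) = bil V (phi V (n2Gm 2^-1 w)) v;
  n2_adjGm : forall w v, bil V (phi V w) (n2Gm 2^-1 v) = bil V (phi V (n2Gp (- 2^-1) w)) v
}.

Section UnitaryN2.
Variable N : unitaryN2.
Local Notation Lm := (n2L N).
Local Notation Jm := (n2J N).
Local Notation Gp := (n2Gp N).
Local Notation Gm := (n2Gm N).

Definition n2lap w := Lm 0 w + (- 2^-1)%:C *: Jm 0 w.

Lemma n2lap_lin : lin1 n2lap.
Proof. exact: lin1_add (n2L_lin N 0) (lin1_scale _ (n2J_lin N 0)). Qed.

Lemma n2lap_eig h p w : Lm 0 w = h%:C *: w -> Jm 0 w = p%:C *: w ->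
  n2lap w = (h - p / 2)%:C *: w.
Proof.
move=> Lw Jw; rewrite /n2lap Lw Jw scalerA -rmorphM -scalerDl -rmorphD.
by congr (_%:C *: w); lra.
Qed.

Lemma shifts_L0_L n : isInt n -> shifts (Lm 0) (Lm n) (- n).
Proof.
move=> n_int w; rewrite (n2_vir _ _ isInt0 n_int) !add0r expr0n /= subr0 mulr0.
by rewrite rmorph0 mul0r scale0r addr0.
Qed.

Lemma shifts_J0_L n : isInt n -> shifts (Jm 0) (Lm n) 0.
Proof.
by move=> n_int w; rewrite commN (n2_LJ _ _ n_int isInt0) rmorph0 oppr0 !scale0r oppr0.
Qed.

Lemma shifts_L0_J n : isInt n -> shifts (Lm 0) (Jm n) (- n).
Proof. by move=> n_int w; rewrite (n2_LJ _ _ isInt0 n_int) add0r rmorphN. Qed.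

Lemma shifts_J0_J n : isInt n -> shifts (Jm 0) (Jm n) 0.
Proof. by move=> n_int w; rewrite (n2_JJ _ _ isInt0 n_int) mulr0 rmorph0 mul0r !scale0r. Qed.

Lemma shifts_L0_Gp r : isHalfOdd r -> shifts (Lm 0) (Gp r) (- r).
Proof. by move=> r_half w; rewrite (n2_LGp _ _ isInt0 r_half) mul0r sub0r add0r. Qed.

Lemma shifts_J0_Gp r : isHalfOdd r -> shifts (Jm 0) (Gp r) 1.
Proof. by move=> r_half w; rewrite (n2_JGp _ _ isInt0 r_half) add0r rmorph1 scale1r. Qed.

Lemma shifts_L0_Gm r : isHalfOdd r -> shifts (Lm 0) (Gm r) (- r).
Proof. by move=> r_half w; rewrite (n2_LGm _ _ isInt0 r_half) mul0r sub0r add0r. Qed.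

Lemma shifts_J0_Gm r : isHalfOdd r -> shifts (Jm 0) (Gm r) (- 1).
Proof. by move=> r_half w; rewrite (n2_JGm _ _ isInt0 r_half) add0r rmorphN1 scaleN1r. Qed.

Lemma n2lap_shift B (a a' : R) : lin1 B -> shifts (Lm 0) B a -> shifts (Jm 0) B a' ->
  shifts n2lap B (a - a' / 2).
Proof.
move=> hB sL sJ; have := shifts_comb (- 2^-1) hB sL sJ.
by rewrite (_ : a + - 2^-1 * a' = a - a' / 2) //; lra.
Qed.

Lemma n2lap_commute B : lin1 B ->
  (forall w, comm (Lm 0) B w = 0) -> (forall w, comm (Jm 0) B w = 0) ->
  forall w, n2lap (B w) = B (n2lap w).
Proof.
move=> hB cL cJ w; apply: shifts0_commute.
have sL : shifts (Lm 0) B 0 by move=> v; rewrite cL scale0r.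
have sJ : shifts (Jm 0) B 0 by move=> v; rewrite cJ scale0r.
by have := n2lap_shift hB sL sJ; rewrite mul0r subr0.
Qed.

Lemma n2lap_Gp_commute w : n2lap (Gp (- 2^-1) w) = Gp (- 2^-1) (n2lap w).
Proof.
apply: shifts0_commute.
have := n2lap_shift (n2Gp_lin N _) (shifts_L0_Gp isHalfOdd_Nhalf)
  (shifts_J0_Gp isHalfOdd_Nhalf).
by rewrite (_ : - - 2^-1 - 1 / 2 = 0 :> R) //; lra.
Qed.

Lemma n2_L0_J0_commute w : Jm 0 (Lm 0 w) = Lm 0 (Jm 0 w).
Proof. by apply/esym/shifts0_commute; have := shifts_L0_J isInt0; rewrite oppr0. Qed.

Lemma n2_anticomm w : Gp (- 2^-1) (Gm 2^-1 w) + Gm 2^-1 (Gp (- 2^-1) w) = n2lap w.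
Proof.
have := n2_GpGm N w isHalfOdd_Nhalf isHalfOdd_half; rewrite /acomm => ->.
rewrite (_ : - 2^-1 + 2^-1 = 0) ?addNr // (_ : (- 2^-1 - 2^-1) / 2 = - 2^-1 :> R); last by lra.
by rewrite (_ : (- 2^-1 : R) ^+ 2 - 4^-1 = 0) ?mulr0 ?rmorph0 ?mul0r ?scale0r ?addr0 //; lra.
Qed.

Lemma hnorm_n2lap x w : n2lap w = x%:C *: w ->
  x%:C * hnorm w = hnorm (Gm 2^-1 w) + hnorm (Gp (- 2^-1) w).
Proof.
by move=> Hw; rewrite /hnorm -bilZr -Hw -n2_anticomm bilDr n2_adjGp (n2_adjGm _ w).
Qed.

Lemma n2lap_eig_ge0 x w : n2lap w = x%:C *: w -> w <> 0 -> 0 <= x.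
Proof.
move=> /hnorm_n2lap Hw w_nz.
have : 0 <= x%:C * hnorm w by rewrite Hw addr_ge0 ?hnorm_ge0.
by rewrite pmulr_lge0 ?ler0c //; exact: pos_def.
Qed.

Lemma n2lap_eig_lt0 x w : n2lap w = x%:C *: w -> x < 0 -> w = 0.
Proof.
move=> Hw x_lt0; have [//|/eqP w_nz] := eqVneq w 0.
by move: x_lt0; rewrite ltNge (n2lap_eig_ge0 Hw w_nz).
Qed.

Lemma n2lap_kernel w : n2lap w = 0 -> Gm 2^-1 w = 0 /\ Gp (- 2^-1) w = 0.
Proof.
move=> w0; have /hnorm_n2lap : n2lap w = 0%:C *: w by rewrite scale0r.
rewrite mul0r => /esym/eqP; rewrite paddr_eq0 ?hnorm_ge0 // => /andP[/eqP ? /eqP ?].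
by split; apply: hnorm_eq0.
Qed.

Lemma n2lap_kernel_mode B (a a' : R) w :
  lin1 B -> shifts (Lm 0) B a -> shifts (Jm 0) B a' -> a - a' / 2 < 0 ->
  n2lap w = 0 -> B w = 0.
Proof.
move=> hB sL sJ neg w0; apply: n2lap_eig_lt0 neg.
by rewrite (shifts_eig (h := 0) hB (n2lap_shift hB sL sJ)) ?add0r // w0 scale0r.
Qed.

Lemma n2lap_kernel_primary w : n2lap w = 0 ->
  [/\ forall n, isInt n -> 1 <= n -> Lm n w = 0 /\ Jm n w = 0,
      forall r, isHalfOdd r -> 0 < r -> Gp r w = 0 /\ Gm r w = 0
    & Gp (- 2^-1) w = 0].
Proof.
move=> w0; have [Gm_w Gp_w] := n2lap_kernel w0.
split=> // [n n_int n_ge1 | r r_half r_gt0]; split.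
- by apply: (n2lap_kernel_mode (n2L_lin N n) (shifts_L0_L n_int) (shifts_J0_L n_int)) w0; lra.
- by apply: (n2lap_kernel_mode (n2J_lin N n) (shifts_L0_J n_int) (shifts_J0_J n_int)) w0; lra.
- apply: (n2lap_kernel_mode (n2Gp_lin N r) (shifts_L0_Gp r_half) (shifts_J0_Gp r_half)) w0.
  lra.
- have [->|r_ge] := halfodd_pos_cases r_half r_gt0; first by [].
  apply: (n2lap_kernel_mode (n2Gm_lin N r) (shifts_L0_Gm r_half) (shifts_J0_Gm r_half)) w0.
  lra.
Qed.

End UnitaryN2.

Lemma isHalfOdd_N3half : isHalfOdd (- 3 / 2 : R).
Proof. by exists (- 2); rewrite mulrNz; lra. Qed.

(* [t = t_(-3/2) vac] and [L_1], [Lbar_1] kill [vac]: commute them past the mode. *)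
Lemma holo_quasi_primary t :
  (forall m r v, isInt m -> isHalfOdd r ->
     comm (L V m) (modeG Y t r) v = (m / 2 - r)%:C *: modeG Y t (m + r) v) ->
  (forall v, comm (modeG Y t (- 3 / 2)) (Lb V 1) v = 0) ->
  L V 1 t = 0 /\ Lb V 1 t = 0.
Proof.
move=> LG cross; have t_vac : t = modeG Y t (- 3 / 2) (vac V).
  by rewrite /modeG (_ : - 3 / 2 + 2^-1 = -1) ?vac_create //; lra.
have L1_vac : L V 1 (vac V) = 0 by apply: Y_vac_eq0; left; lra.
have Lb1_vac : Lb V 1 (vac V) = 0 by apply: Y_vac_eq0; right; lra.
rewrite t_vac; split.
  have := LG 1 _ (vac V) isInt1 isHalfOdd_N3half.
  rewrite /comm L1_vac {2}/modeG (lin1_0 (Y_lin _ _ _)) subr0 => ->.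
  by rewrite /modeG Y_vac_eq0 ?scaler0 //; left; lra.
have := cross (vac V); rewrite /comm Lb1_vac /modeG (lin1_0 (Y_lin _ _ _)) sub0r.
by move/eqP; rewrite oppr_eq0 => /eqP.
Qed.

Lemma anti_quasi_primary t :
  (forall m r v, isInt m -> isHalfOdd r ->
     comm (Lb V m) (modeGb Y t r) v = (m / 2 - r)%:C *: modeGb Y t (m + r) v) ->
  (forall v, comm (L V 1) (modeGb Y t (- 3 / 2)) v = 0) ->
  L V 1 t = 0 /\ Lb V 1 t = 0.
Proof.
move=> LG cross; have t_vac : t = modeGb Y t (- 3 / 2) (vac V).
  by rewrite /modeGb (_ : - 3 / 2 + 2^-1 = -1) ?vac_create //; lra.
have L1_vac : L V 1 (vac V) = 0 by apply: Y_vac_eq0; left; lra.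
have Lb1_vac : Lb V 1 (vac V) = 0 by apply: Y_vac_eq0; right; lra.
rewrite t_vac; split.
  by have := cross (vac V); rewrite /comm L1_vac /modeGb (lin1_0 (Y_lin _ _ _)) subr0.
have := LG 1 _ (vac V) isInt1 isHalfOdd_N3half.
rewrite /comm Lb1_vac {2}/modeGb (lin1_0 (Y_lin _ _ _)) subr0 => ->.
by rewrite /modeGb Y_vac_eq0 ?scaler0 //; right; lra.
Qed.

Lemma bil_inv_quasi_primary a (h hb : R) (k : int) u v (m n : R) :
  Defs.hom V h hb a -> 2 * (h - hb) = k%:~R -> L V 1 a = 0 -> Lb V 1 a = 0 ->
  bil V u (Y a m n v) = (-1) ^ sign_exp k * bil V (Y a (2 * h - m - 2) (2 * hb - n - 2) u) v.
Proof.
move=> a_hom hk L1a Lb1a; rewrite (bil_inv (N := 1) a_hom hk L1a Lb1a) !big_ord1 /=.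
by rewrite !subr0 divr1.
Qed.

Lemma adjoint_holo a b : Defs.hom V (3 / 2) 0 a -> L V 1 a = 0 -> Lb V 1 a = 0 ->
  phi V b = a ->
  forall r w v, bil V (phi V w) (modeG Y a r v) = bil V (phi V (modeG Y b (- r) w)) v.
Proof.
move=> a_hom L1a Lb1a phib r w v.
have hk : 2 * (3 / 2 - 0) = (3 : int)%:~R :> R by rewrite -[(3 : int)%:~R]/(3 : R); lra.
rewrite /modeG (bil_inv_quasi_primary _ _ _ _ a_hom hk L1a Lb1a) phi_Y phib.
rewrite (_ : sign_exp 3 = 6) // -exprnP -signr_odd /= expr0 mul1r.
by congr (bil V (Y a _ _ _) v); lra.
Qed.

Lemma adjoint_anti a b : Defs.hom V 0 (3 / 2) a -> L V 1 a = 0 -> Lb V 1 a = 0 ->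
  phi V b = - a ->
  forall r w v, bil V (phi V w) (modeGb Y a r v) = bil V (phi V (modeGb Y b (- r) w)) v.
Proof.
move=> a_hom L1a Lb1a phib r w v.
have hk : 2 * (0 - 3 / 2) = (- 3 : int)%:~R :> R.
  by rewrite -[(- 3 : int)%:~R]/(- 3 : R); lra.
rewrite /modeGb (bil_inv_quasi_primary _ _ _ _ a_hom hk L1a Lb1a) phi_Y phib YNl bilNl.
rewrite (_ : sign_exp (- 3) = 3) // -exprnP -signr_odd /= expr1 mulN1r.
by congr (- bil V (Y a _ _ _) v); lra.
Qed.

Lemma adjoint_Gp w v :
  bil V (phi V w) (modeG Y (tp V) (- 2^-1) v) = bil V (phi V (modeG Y (tm V) 2^-1 w)) v.
Proof.
have [L1 Lb1] := holo_quasi_primary (nsLGp V)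
  (fun v => cross_mixed2 v isHalfOdd_N3half isInt1 (or_introl erefl) (or_introl erefl)).
by rewrite (adjoint_holo (tp_hom V) L1 Lb1 (phi_tm V)) opprK.
Qed.

Lemma adjoint_Gm w v :
  bil V (phi V w) (modeG Y (tm V) 2^-1 v) = bil V (phi V (modeG Y (tp V) (- 2^-1) w)) v.
Proof.
have [L1 Lb1] := holo_quasi_primary (nsLGm V)
  (fun v => cross_mixed2 v isHalfOdd_N3half isInt1 (or_intror erefl) (or_introl erefl)).
exact: (adjoint_holo (tm_hom V) L1 Lb1 (phi_tp V)).
Qed.

Lemma adjoint_Gpb w v :
  bil V (phi V w) (modeGb Y (tpb V) (- 2^-1) v) = bil V (phi V (modeGb Y (tmb V) 2^-1 w)) v.
Proof.
have [L1 Lb1] := anti_quasi_primary (nsLGpb V)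
  (fun v => cross_mixed1 v isInt1 isHalfOdd_N3half (or_introl erefl) (or_introl erefl)).
by rewrite (adjoint_anti (tpb_hom V) L1 Lb1 (phi_tmb V)) opprK.
Qed.

Lemma adjoint_Gmb w v :
  bil V (phi V w) (modeGb Y (tmb V) 2^-1 v) = bil V (phi V (modeGb Y (tpb V) (- 2^-1) w)) v.
Proof.
have [L1 Lb1] := anti_quasi_primary (nsLGmb V)
  (fun v => cross_mixed1 v isInt1 isHalfOdd_N3half (or_introl erefl) (or_intror erefl)).
exact: (adjoint_anti (tmb_hom V) L1 Lb1 (phi_tpb V)).
Qed.

Definition holoN2 : unitaryN2 := {|
  n2L := L V; n2J := modeJ Y (J V); n2Gp := modeG Y (tp V); n2Gm := modeG Y (tm V); n2c := c V;
  n2L_lin := fun n => Y_lin _ _ _; n2J_lin := fun n => Y_lin _ _ _;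
  n2Gp_lin := fun r => Y_lin _ _ _; n2Gm_lin := fun r => Y_lin _ _ _;
  n2_vir := vir V; n2_JJ := nsJJ V; n2_JGp := nsJGp V; n2_JGm := nsJGm V;
  n2_LGp := nsLGp V; n2_LGm := nsLGm V; n2_LJ := nsLJ V; n2_GpGm := nsGpGm V;
  n2_adjGp := adjoint_Gp; n2_adjGm := adjoint_Gm |}.

Definition antiN2 : unitaryN2 := {|
  n2L := Lb V; n2J := modeJb Y (Jb V); n2Gp := modeGb Y (tpb V); n2Gm := modeGb Y (tmb V);
  n2c := cb V;
  n2L_lin := fun n => Y_lin _ _ _; n2J_lin := fun n => Y_lin _ _ _;
  n2Gp_lin := fun r => Y_lin _ _ _; n2Gm_lin := fun r => Y_lin _ _ _;
  n2_vir := vir_b V; n2_JJ := nsJJb V; n2_JGp := nsJGpb V; n2_JGm := nsJGmb V;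
  n2_LGp := nsLGpb V; n2_LGm := nsLGmb V; n2_LJ := nsLJb V; n2_GpGm := nsGpGmb V;
  n2_adjGp := adjoint_Gpb; n2_adjGm := adjoint_Gmb |}.

(** * Hodge theory for [d] *)

Local Notation J0 := (modeJ Y (J V) 0).
Local Notation Jb0 := (modeJb Y (Jb V) 0).

Definition lapN22 w := n2lap holoN2 w + n2lap antiN2 w.
Definition dstar w := modeG Y (tm V) 2^-1 w + modeGb Y (tmb V) 2^-1 w.

Lemma dN22_lin : lin1 (dN22 V). Proof. exact: lin1_add (Y_lin _ _ _) (Y_lin _ _ _). Qed.
Lemma dstar_lin : lin1 dstar. Proof. exact: lin1_add (Y_lin _ _ _) (Y_lin _ _ _). Qed.
Lemma lapN22_lin : lin1 lapN22. Proof. exact: lin1_add (n2lap_lin _) (n2lap_lin _). Qed.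

Lemma d_dstar_anticomm w : dN22 V (dstar w) + dstar (dN22 V w) = lapN22 w.
Proof.
have c1 := cross_odd w isHalfOdd_Nhalf isHalfOdd_half (or_introl erefl) (or_intror erefl).
have c2 := cross_odd w isHalfOdd_half isHalfOdd_Nhalf (or_intror erefl) (or_introl erefl).
rewrite /dN22 /dstar /lapN22 -(n2_anticomm holoN2) -(n2_anticomm antiN2) /=.
move: c1 c2; rewrite /acomm /modeG /modeGb !(lin1D (Y_lin _ _ _)) => c1 c2.
(* regroup the eight products as the two chiral anticommutators plus [c1] and [c2] *)
by rewrite (AC ((2*2)*(2*2)) (((1*5)*(4*8))*((2*7)*(6*3)))) /= c1 c2 !addr0.
Qed.

Lemma lapN22_dN22 w : lapN22 (dN22 V w) = dN22 V (lapN22 w).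
Proof.
have holo_Gp : forall v, n2lap holoN2 (modeG Y (tp V) (- 2^-1) v) =
    modeG Y (tp V) (- 2^-1) (n2lap holoN2 v) := n2lap_Gp_commute holoN2.
have anti_Gpb : forall v, n2lap antiN2 (modeGb Y (tpb V) (- 2^-1) v) =
    modeGb Y (tpb V) (- 2^-1) (n2lap antiN2 v) := n2lap_Gp_commute antiN2.
have holo_Gpb : forall v, n2lap holoN2 (modeGb Y (tpb V) (- 2^-1) v) =
    modeGb Y (tpb V) (- 2^-1) (n2lap holoN2 v).
  apply: (n2lap_commute (N := holoN2) (B := modeGb Y (tpb V) (- 2^-1)) (Y_lin _ _ _)) => v.
    exact: (cross_mixed1 (A := L V 0) v isInt0 isHalfOdd_Nhalf (or_introl erefl)
      (or_introl erefl)).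
  exact: (cross_mixed1 (A := J0) v isInt0 isHalfOdd_Nhalf (or_intror erefl) (or_introl erefl)).
have anti_Gp : forall v, n2lap antiN2 (modeG Y (tp V) (- 2^-1) v) =
    modeG Y (tp V) (- 2^-1) (n2lap antiN2 v).
  apply: (n2lap_commute (N := antiN2) (B := modeG Y (tp V) (- 2^-1)) (Y_lin _ _ _)) => v.
    by rewrite commN (cross_mixed2 (B := Lb V 0) v isHalfOdd_Nhalf isInt0 (or_introl erefl)
      (or_introl erefl)) oppr0.
  by rewrite commN (cross_mixed2 (B := Jb0) v isHalfOdd_Nhalf isInt0 (or_introl erefl)
    (or_intror erefl)) oppr0.
rewrite /lapN22 /dN22 !(lin1D (n2lap_lin _)) holo_Gp holo_Gpb anti_Gp anti_Gpb.
by rewrite /modeG /modeGb !(lin1D (Y_lin _ _ _)) addrACA.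
Qed.

Lemma adjoint_dN22 w v : bil V (phi V w) (dN22 V v) = bil V (phi V (dstar w)) v.
Proof. by rewrite /dN22 bilDr adjoint_Gp adjoint_Gpb -bilDl -phiD. Qed.

Lemma N22_eigen_decomp v : exists s : seq (R * R * (R * R * F)), v = \sum_(x <- s) x.2.2 /\
  forall x, x \in s ->
    jeig (L V 0) (Lb V 0) x.1.1 x.1.2 x.2.2 /\ jeig J0 Jb0 x.2.1.1 x.2.1.2 x.2.2.
Proof.
apply: (@jeig_decomp_refine R F (L V 0) (Lb V 0) J0 Jb0 (Y_lin _ _ _) (Y_lin _ _ _)
  (Y_lin _ _ _) (Y_lin _ _ _) _ _ _ _ (grad_decomp V) (J0_decomp V)).
- exact: n2_L0_J0_commute holoN2.
- move=> w; apply/esym/comm_eq0.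
  exact: (cross_even (A := L V 0) (B := Jb0) w isInt0 isInt0 (or_introl erefl)
    (or_intror erefl)).
- move=> w; apply/comm_eq0.
  exact: (cross_even (A := J0) (B := Lb V 0) w isInt0 isInt0 (or_intror erefl)
    (or_introl erefl)).
- exact: n2_L0_J0_commute antiN2.
Qed.

Lemma harmonic_split (a b : R) u :
  n2lap holoN2 u = a%:C *: u -> n2lap antiN2 u = b%:C *: u -> a + b = 0 ->
  n2lap holoN2 u = 0 /\ n2lap antiN2 u = 0.
Proof.
move=> Ha Hb ab0; have [->|/eqP u_nz] := eqVneq u 0.
  by rewrite !(lin1_0 (n2lap_lin _)).
move/eqP: ab0; rewrite paddr_eq0 ?(n2lap_eig_ge0 Ha u_nz) ?(n2lap_eig_ge0 Hb u_nz) //.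
by case/andP=> /eqP a0 /eqP b0; rewrite Ha Hb a0 b0 rmorph0 !scale0r.
Qed.

Lemma cc_primary_of_harmonic p q u : J0 u = p%:C *: u -> Jb0 u = q%:C *: u ->
  n2lap holoN2 u = 0 -> n2lap antiN2 u = 0 -> cc_primary V p q u.
Proof.
move=> Ju Jbu /n2lap_kernel_primary[holo_n holo_r holo_d].
move=> /n2lap_kernel_primary[anti_n anti_r anti_d].
split=> // [n n_int n_ge1 | r r_half r_gt0].
  by have [? ?] := holo_n n n_int n_ge1; have [? ?] := anti_n n n_int n_ge1.
by have [? ?] := holo_r r r_half r_gt0; have [? ?] := anti_r r r_half r_gt0.
Qed.

Lemma cc_primary_closed p q v : cc_primary V p q v -> dN22 V v = 0.
Proof. by case=> _ _ _ _ [Gp_v Gpb_v]; rewrite /dN22 Gp_v Gpb_v addr0. Qed.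

Lemma cc_primary_coclosed p q v : cc_primary V p q v -> dstar v = 0.
Proof.
case=> _ _ _ pos _; have half_gt0 : (0 : R) < 2^-1 by rewrite invr_gt0.
have [_ Gm_v _ Gmb_v] := pos _ isHalfOdd_half half_gt0.
by rewrite /dstar Gm_v Gmb_v addr0.
Qed.

Lemma cc_exact_eq0 s : dsum_elem (cc_primary V) s -> cohomologous (dN22 V) (dsum_val s) 0 ->
  forall x, x \in s -> x.2 = 0.
Proof.
move=> [uniq_s cc_s] [X]; rewrite subr0 => SdX x xs.
have coclosed : dstar (dsum_val s) = 0.
  rewrite /dsum_val (lin1_sum dstar_lin) big1_seq // => y /andP[_ ys].
  exact: cc_primary_coclosed (cc_s y ys).
have /hnorm_eq0 S0 : hnorm (dsum_val s) = 0.
  by rewrite /hnorm {2}SdX adjoint_dN22 coclosed phi0 bil0l.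
have eig_s y : y \in s -> jeig J0 Jb0 y.1.1 y.1.2 y.2 by case/cc_s.
have := jeig_sep (Y_lin _ _ _) (Y_lin _ _ _) eig_s S0 x.1.
by rewrite big_uniq_key.
Qed.

Lemma closed_cohomologous_cc v : dN22 V v = 0 ->
  exists s, dsum_elem (cc_primary V) s /\ cohomologous (dN22 V) v (dsum_val s).
Proof.
move=> dv; have [s [vs eig_s]] := N22_eigen_decomp v.
pose holo (x : R * R * (R * R * F)) := x.1.1 - x.2.1.1 / 2.
pose anti (x : R * R * (R * R * F)) := x.1.2 - x.2.1.2 / 2.
have holo_eig x : x \in s -> n2lap holoN2 x.2.2 = (holo x)%:C *: x.2.2.
  by case/eig_s => -[Lx _] [Jx _]; exact: n2lap_eig.
have anti_eig x : x \in s -> n2lap antiN2 x.2.2 = (anti x)%:C *: x.2.2.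
  by case/eig_s => -[_ Lbx] [_ Jbx]; exact: n2lap_eig.
have lap_eig x : x \in s -> lapN22 x.2.2 = (holo x + anti x)%:C *: x.2.2.
  by move=> xs; rewrite /lapN22 holo_eig // anti_eig // -scalerDl -rmorphD.
have := closed_cohomologous_harmonic dN22_lin dstar_lin lapN22_lin d_dstar_anticomm lapN22_dN22
  lap_eig vs dv.
rewrite -big_filter; set h := filter _ s => v_harm.
have harm x : x \in h -> [/\ J0 x.2.2 = x.2.1.1%:C *: x.2.2, Jb0 x.2.2 = x.2.1.2%:C *: x.2.2,
    n2lap holoN2 x.2.2 = 0 & n2lap antiN2 x.2.2 = 0].
  rewrite mem_filter => /andP[/eqP lam0 xs]; have [_ [Jx Jbx]] := eig_s x xs.
  have sum0 : holo x + anti x = 0 by apply: complexI; rewrite lam0 rmorph0.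
  by have [] := harmonic_split (holo_eig x xs) (anti_eig x xs) sum0.
exists [seq (P, \sum_(x <- h | x.2.1 == P) x.2.2) | P <- undup (map (fun x => x.2.1) h)].
split; last by rewrite /dsum_val big_map big_undup_partition.
split; first by rewrite -map_comp map_id undup_uniq.
move=> _ /mapP[P _ ->] /=; apply: cc_primary_of_harmonic.
- by apply: (lin1_sum_eig (Y_lin _ _ _)) => x /harm[Jx _ _ _] /eqP <-.
- by apply: (lin1_sum_eig (Y_lin _ _ _)) => x /harm[_ Jbx _ _] /eqP <-.
- by rewrite (lin1_sum (n2lap_lin _)) big1_seq // => x /andP[_ /harm[]].
- by rewrite (lin1_sum (n2lap_lin _)) big1_seq // => x /andP[_ /harm[]].
Qed.

End FullVOA.

Unset Implicit Arguments.

Theorem proposition2p11 (R : realType) (F : lmodType R[i]) (Y : F -> R -> R -> F -> F) (V : unitaryN22 Y) :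
  [/\ (* well defined: chiral-chiral primaries are d-closed *)
      (forall p q v, cc_primary V p q v -> dN22 V v = 0),
      (* injective: an element of (+)_{p,q} C^{(p,q)}(F)_cc that is d-exact is 0 *)
      (forall s, dsum_elem (cc_primary V) s -> cohomologous (dN22 V) (dsum_val s) 0 ->
         forall x, x \in s -> x.2 = 0)
    & (* surjective: every d-closed vector is cohomologous to such an element *)
      (forall v, dN22 V v = 0 ->
         exists s, dsum_elem (cc_primary V) s /\ cohomologous (dN22 V) v (dsum_val s))].
Proof.
split; [exact: cc_primary_closed | exact: cc_exact_eq0 | exact: closed_cohomologous_cc].
Qed.
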